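(* Suppose $W^+$ is inverse S-shaped (with $W^+(0)=0$, $W^+(1)=1$). Then there exists a unique index $J'\in\{1,\dots,n^+\}$ such that $$h^+_{n^+}>h^+_{n^+-1}>\cdots>h^+_{J'}\quad\text{and}\quad h^+_{J'}\le h^+_{J'-1}<h^+_{J'-2}<\cdots<h^+_1$$ (such $J'$ is called the flexional index).
   Context: Fix $N\in\mathbb{N}$ and an integer $1\le n^+\le N$. A function $f:[0,1]\to\mathbb{R}$ is inverse S-shaped if it is strictly increasing, continuously differentiable, and there is $x_0\in[0,1]$ such that $f'$ is strictly decreasing on $[0,x_0]$ and strictly increasing on $[x_0,1]$. $W^+:[0,1]\to[0,1]$ is such a function with $W^+(0)=0$, $W^+(1)=1$, and $h^+_j:=W^+\!\left(\frac{n^+-j+1}{N}\right)-W^+\!\left(\frac{n^+-j}{N}\right)$ for $j=1,\dots,n^+$. Chains of inequalities with no terms are vacuous (e.g. the second chain when $J'=1$). *)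

From Stdlib Require Import Reals Lra Lia.
Open Scope R_scope.

Definition has_derivative_on_01 (f f' : R -> R) : Prop :=
  forall x, 0 <= x <= 1 ->
    forall eps, 0 < eps -> exists delta, 0 < delta /\
      forall y, 0 <= y <= 1 -> y <> x -> Rabs (y - x) < delta ->
        Rabs ((f y - f x) / (y - x) - f' x) < eps.

Definition continuous_on_01 (g : R -> R) : Prop :=
  forall x, 0 <= x <= 1 ->
    forall eps, 0 < eps -> exists delta, 0 < delta /\
      forall y, 0 <= y <= 1 -> Rabs (y - x) < delta -> Rabs (g y - g x) < eps.

Definition inverse_S_shaped (f : R -> R) : Prop :=
  (forall x y, 0 <= x -> x < y -> y <= 1 -> f x < f y) /\
  exists f' : R -> R,
    has_derivative_on_01 f f' /\ continuous_on_01 f' /\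
    exists x0, 0 <= x0 <= 1 /\
      (forall x y, 0 <= x -> x < y -> y <= x0 -> f' y < f' x) /\
      (forall x y, x0 <= x -> x < y -> y <= 1 -> f' x < f' y).

Definition hplus (W : R -> R) (N np j : nat) : R :=
  W (INR (np + 1 - j) / INR N) - W (INR (np - j) / INR N).

(** Put [d k := W((k+1)/N) - W(k/N)], so that [h^+_j = d (n^+ - j)].
    By the mean value theorem each increment is [W'(c)/N] for some [c] in its
    cell. As [W'] strictly decreases and then strictly increases, three
    consecutive increments can never satisfy [d k <= d (k+1)] and
    [d (k+2) <= d (k+1)]: once the increments rise they keep rising. Hence
    along [k = 0, 1, ..., n^+ - 1] the increments strictly decrease up to the
    first [k] with [d k <= d (k+1)] and strictly increase afterwards; that [k]
    is [n^+ - J'], and the sign pattern determines it. *)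

From Stdlib Require Import Reals Lra Lia.
Open Scope R_scope.

Definition clamp01 (x : R) : R := Rmax 0 (Rmin 1 x).

Lemma clamp01_id x : 0 <= x <= 1 -> clamp01 x = x.
Proof. intros. unfold clamp01, Rmax, Rmin; repeat destruct Rle_dec; lra. Qed.

Lemma clamp01_range x : 0 <= clamp01 x <= 1.
Proof. unfold clamp01, Rmax, Rmin; repeat destruct Rle_dec; lra. Qed.

Lemma clamp01_contract x y : 0 <= x <= 1 -> Rabs (clamp01 y - x) <= Rabs (y - x).
Proof.
  intros. unfold clamp01, Rmax, Rmin; repeat destruct Rle_dec;
  unfold Rabs; repeat destruct Rcase_abs; lra.
Qed.

Lemma has_derivative_on_01_continuous f f' :
  has_derivative_on_01 f f' -> continuous_on_01 f.
Proof.
  intros Hf x Hx eps Heps.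
  destruct (Hf x Hx 1 Rlt_0_1) as [d [Hd Hslope]].
  set (L := Rabs (f' x) + 1).
  assert (HL : 0 < L) by (pose proof (Rabs_pos (f' x)); unfold L; lra).
  exists (Rmin d (eps / L)); split.
  { apply Rmin_glb_lt; [lra | apply Rdiv_lt_0_compat; lra]. }
  intros y Hy Hyx.
  destruct (Req_dec y x) as [-> | Hne].
  { unfold Rminus; rewrite Rplus_opp_r, Rabs_R0; lra. }
  pose proof (Rmin_l d (eps / L)); pose proof (Rmin_r d (eps / L)).
  set (q := (f y - f x) / (y - x)).
  assert (Hq : Rabs q < L).
  { pose proof (Hslope y Hy Hne ltac:(lra)) as Hclose.
    pose proof (Rabs_triang (q - f' x) (f' x)).
    replace (q - f' x + f' x) with q in * by ring. unfold L, q in *; lra. }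
  replace (f y - f x) with (q * (y - x)) by (unfold q; field; lra).
  rewrite Rabs_mult.
  assert (Hpos : 0 < Rabs (y - x)) by (apply Rabs_pos_lt; lra).
  apply Rlt_le_trans with (L * (eps / L)); [| right; field; lra].
  apply Rle_lt_trans with (L * Rabs (y - x)).
  - apply Rmult_le_compat_r; lra.
  - apply Rmult_lt_compat_l; lra.
Qed.

Lemma continuity_pt_clamp01 g x :
  continuous_on_01 g -> 0 <= x <= 1 -> continuity_pt (fun t => g (clamp01 t)) x.
Proof.
  intros Hg Hx eps Heps.
  destruct (Hg x Hx eps Heps) as [d [Hd Hclose]].
  exists d; split; [exact Hd |].
  intros y [_ Hy]; simpl in *; unfold R_dist in *.
  rewrite (clamp01_id x Hx).
  apply Hclose; [apply clamp01_range |].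
  eapply Rle_lt_trans; [apply clamp01_contract, Hx | exact Hy].
Qed.

Lemma derivable_pt_lim_clamp01 f f' x :
  has_derivative_on_01 f f' -> 0 < x < 1 ->
  derivable_pt_lim (fun t => f (clamp01 t)) x (f' x).
Proof.
  intros Hf Hx eps Heps.
  destruct (Hf x ltac:(lra) eps Heps) as [d [Hd Hslope]].
  assert (Hdelta : 0 < Rmin d (Rmin x (1 - x))) by (repeat apply Rmin_glb_lt; lra).
  exists (mkposreal _ Hdelta); simpl.
  intros h Hh0 Hh.
  pose proof (Rmin_l d (Rmin x (1 - x))); pose proof (Rmin_r d (Rmin x (1 - x))).
  pose proof (Rmin_l x (1 - x)); pose proof (Rmin_r x (1 - x)).
  assert (Hin : 0 <= x + h <= 1) by (split; apply Rabs_def2 in Hh as [? ?]; lra).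
  rewrite (clamp01_id (x + h) Hin), (clamp01_id x) by lra.
  replace h with (x + h - x) at 2 by ring.
  apply Hslope; [exact Hin | lra | replace (x + h - x) with h by ring; lra].
Qed.

Lemma MVT_01 f f' a b :
  has_derivative_on_01 f f' -> 0 <= a -> a < b -> b <= 1 ->
  exists c, a < c < b /\ f b - f a = f' c * (b - a).
Proof.
  intros Hf Ha Hab Hb.
  set (g := fun t => f (clamp01 t)).
  assert (Hg : forall c, a < c < b -> derivable_pt g c).
  { intros c Hc; exists (f' c); apply derivable_pt_lim_clamp01; [exact Hf | lra]. }
  destruct (MVT g id a b Hg (fun c _ => derivable_pt_id c) Hab) as [c [Hc Heq]].
  - intros c Hc; apply continuity_pt_clamp01;
      [apply (has_derivative_on_01_continuous f f' Hf) | lra].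
  - intros c _; apply derivable_continuous_pt, derivable_pt_id.
  - exists c; split; [exact Hc |].
    rewrite derive_pt_id in Heq.
    rewrite (derive_pt_eq_0 g c (f' c) (Hg c Hc)) in Heq
      by (apply derivable_pt_lim_clamp01; [exact Hf | lra]).
    unfold g, id in Heq; rewrite (clamp01_id a), (clamp01_id b) in Heq by lra.
    lra.
Qed.

Section ValleyDerivative.

Variables (f f' : R -> R) (x0 : R).
Hypothesis f_deriv : has_derivative_on_01 f f'.
Hypothesis f'_decr : forall x y, 0 <= x -> x < y -> y <= x0 -> f' y < f' x.
Hypothesis f'_incr : forall x y, x0 <= x -> x < y -> y <= 1 -> f' x < f' y.

Lemma increment_MVT a h :
  0 <= a -> 0 < h -> a + h <= 1 ->
  exists c, a < c < a + h /\ f (a + h) - f a = h * f' c.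
Proof.
  intros Ha Hh Hah.
  destruct (MVT_01 f f' a (a + h) f_deriv Ha ltac:(lra) Hah) as [c [Hc Heq]].
  exists c; split; [exact Hc | rewrite Heq; ring].
Qed.

Lemma increment_rise_propagates t h :
  0 <= t -> 0 < h -> t + 3 * h <= 1 ->
  f (t + h) - f t <= f (t + 2 * h) - f (t + h) ->
  f (t + 2 * h) - f (t + h) < f (t + 3 * h) - f (t + 2 * h).
Proof.
  intros Ht Hh Hend Hrise.
  destruct (increment_MVT t h) as [c0 [Hc0 E0]]; try lra.
  destruct (increment_MVT (t + h) h) as [c1 [Hc1 E1]]; try lra.
  destruct (increment_MVT (t + 2 * h) h) as [c2 [Hc2 E2]]; try lra.
  replace (t + h + h) with (t + 2 * h) in * by ring.
  replace (t + 2 * h + h) with (t + 3 * h) in * by ring.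
  destruct (Rle_lt_dec (t + 2 * h) x0) as [Hleft | Hx0].
  - exfalso; assert (f' c1 < f' c0) by (apply f'_decr; lra); nra.
  - destruct (Rle_lt_dec x0 (t + h)) as [Hright | Hx0'].
    + assert (f' c1 < f' c2) by (apply f'_incr; lra); nra.
    + (* x0 splits the middle cell: compare each part with its outer neighbour *)
      destruct (MVT_01 f f' (t + h) x0 f_deriv) as [cl [Hcl El]]; try lra.
      destruct (MVT_01 f f' x0 (t + 2 * h) f_deriv) as [cr [Hcr Er]]; try lra.
      assert (f' cl < f' c0) by (apply f'_decr; lra).
      assert (f' cr < f' c2) by (apply f'_incr; lra).
      assert (f' c0 < f' cr) by nra.
      nra.
Qed.

Definition grid_increment (N k : nat) : R :=
  f (INR (S k) / INR N) - f (INR k / INR N).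

Lemma grid_increment_rise_propagates N k :
  (k + 3 <= N)%nat ->
  grid_increment N k <= grid_increment N (S k) ->
  grid_increment N (S k) < grid_increment N (S (S k)).
Proof.
  intros HkN. unfold grid_increment.
  assert (HN : 0 < INR N) by (apply lt_0_INR; lia).
  assert (Hk3 : INR k + 3 <= INR N).
  { replace (INR k + 3) with (INR (k + 3)) by (rewrite plus_INR; simpl; ring).
    apply le_INR, HkN. }
  set (t := INR k / INR N); set (h := / INR N).
  replace (INR (S k) / INR N) with (t + h) by (unfold t, h; rewrite S_INR; field; lra).
  replace (INR (S (S k)) / INR N) with (t + 2 * h)
    by (unfold t, h; rewrite !S_INR; field; lra).
  replace (INR (S (S (S k))) / INR N) with (t + 3 * h)
    by (unfold t, h; rewrite !S_INR; field; lra).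
  apply increment_rise_propagates.
  - unfold t, Rdiv; apply Rmult_le_pos; [apply pos_INR | left; apply Rinv_0_lt_compat, HN].
  - apply Rinv_0_lt_compat, HN.
  - replace (t + 3 * h) with ((INR k + 3) * / INR N) by (unfold t, h; field; lra).
    rewrite <- (Rinv_r (INR N)) by lra.
    apply Rmult_le_compat_r; [left; apply Rinv_0_lt_compat |]; lra.
Qed.

End ValleyDerivative.

Lemma hplus_grid_increment W N np j :
  (j <= np)%nat -> hplus W N np j = grid_increment W N (np - j).
Proof.
  intros Hj. unfold hplus, grid_increment.
  replace (np + 1 - j)%nat with (S (np - j)) by lia. reflexivity.
Qed.

Lemma hplus_valley W N np j :
  inverse_S_shaped W -> (np <= N)%nat -> (1 <= j)%nat -> (j + 2 <= np)%nat ->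
  hplus W N np (S (S j)) <= hplus W N np (S j) ->
  hplus W N np (S j) < hplus W N np j.
Proof.
  intros [_ [W' [HW' [_ [x0 [_ [Hdecr Hincr]]]]]]] HnpN Hj Hjnp.
  rewrite !hplus_grid_increment by lia.
  set (k := (np - S (S j))%nat).
  replace (np - S j)%nat with (S k) by (unfold k; lia).
  replace (np - j)%nat with (S (S k)) by (unfold k; lia).
  apply (grid_increment_rise_propagates W W' x0); auto.
  unfold k; lia.
Qed.

Definition flexional_index (h : nat -> R) (n J : nat) : Prop :=
  (1 <= J <= n)%nat /\
  (forall j, (J <= j)%nat -> (j < n)%nat -> h (S j) > h j) /\
  ((2 <= J)%nat -> h J <= h (J - 1)%nat) /\
  (forall j, (1 <= j)%nat -> (j + 2 <= J)%nat -> h (S j) < h j).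

Lemma flexional_index_not_lt h n J J' :
  flexional_index h n J -> flexional_index h n J' -> ~ (J < J')%nat.
Proof.
  intros [HJ [Hrise _]] [HJ' [_ [Hdip _]]] Hlt.
  pose proof (Hrise (J' - 1)%nat ltac:(lia) ltac:(lia)) as Hgt.
  replace (S (J' - 1)) with J' in Hgt by lia.
  apply (Rlt_not_le _ _ Hgt), Hdip; lia.
Qed.

Section FlexionalIndex.

Variables (h : nat -> R) (n : nat).
Hypothesis h_valley : forall j, (1 <= j)%nat -> (j + 2 <= n)%nat ->
  h (S (S j)) <= h (S j) -> h (S j) < h j.

Lemma rising_tail_start m :
  (1 <= m <= n)%nat -> (forall j, (m <= j)%nat -> (j < n)%nat -> h (S j) > h j) ->
  exists J, (1 <= J <= n)%nat /\
    (forall j, (J <= j)%nat -> (j < n)%nat -> h (S j) > h j) /\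
    ((2 <= J)%nat -> h J <= h (J - 1)%nat).
Proof.
  induction m as [| m IH]; intros Hm Hrise; [lia |].
  destruct (Nat.eq_dec m 0) as [-> | Hm0].
  { exists 1%nat; repeat split; auto; lia. }
  destruct (Rlt_le_dec (h m) (h (S m))) as [Hup | Hdown].
  - apply IH; [lia |].
    intros j Hj Hjn; destruct (Nat.eq_dec j m) as [-> | Hne]; [exact Hup |].
    apply Hrise; lia.
  - exists (S m); repeat split; auto; try lia.
    intros _; replace (S m - 1)%nat with m by lia; exact Hdown.
Qed.

Lemma falling_below m :
  (m < n)%nat -> h (S m) <= h m ->
  forall j, (1 <= j)%nat -> (j < m)%nat -> h (S j) < h j.
Proof.
  induction m as [| m IH]; intros Hmn Hdown j Hj Hjm; [lia |].
  assert (Hstep : h (S m) < h m) by (apply h_valley; auto; lia).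
  destruct (Nat.eq_dec j m) as [-> | Hne]; [exact Hstep |].
  apply IH; [lia | left; exact Hstep | exact Hj | lia].
Qed.

Lemma flexional_index_exists_unique :
  (1 <= n)%nat -> exists! J, flexional_index h n J.
Proof.
  intros Hn.
  destruct (rising_tail_start n) as [J [HJ [Hrise Hdip]]]; [lia | intros; lia |].
  assert (Hflex : flexional_index h n J).
  { repeat split; auto; try lia.
    intros j Hj HjJ; apply (falling_below (J - 1)); try lia.
    replace (S (J - 1)) with J by lia; apply Hdip; lia. }
  exists J; split; [exact Hflex |].
  intros J' HJ'.
  pose proof (flexional_index_not_lt h n J J' Hflex HJ').
  pose proof (flexional_index_not_lt h n J' J HJ' Hflex).
  lia.
Qed.

End FlexionalIndex.

Theorem lemma1 (N np : nat) (W : R -> R)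
  (Hnp1 : (1 <= np)%nat) (HnpN : (np <= N)%nat)
  (HS : inverse_S_shaped W) (HW0 : W 0 = 0) (HW1 : W 1 = 1) :
  exists! J : nat, (1 <= J <= np)%nat /\
    (* h_{n+} > h_{n+-1} > ... > h_{J} *)
    (forall j, (J <= j)%nat -> (j < np)%nat ->
        hplus W N np (S j) > hplus W N np j) /\
    (* h_{J} <= h_{J-1}  (only when J >= 2) *)
    ((2 <= J)%nat -> hplus W N np J <= hplus W N np (J - 1)) /\
    (* h_{J-1} < h_{J-2} < ... < h_1 *)
    (forall j, (1 <= j)%nat -> (j + 2 <= J)%nat ->
        hplus W N np (S j) < hplus W N np j).
Proof.
  apply (flexional_index_exists_unique (hplus W N np) np); [| exact Hnp1].
  intros j Hj Hjnp; apply hplus_valley; assumption.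
Qed.
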